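(* Let $N,K,d,T$ be positive integers, $W>0$ and $L_0>0$. For each round $t\in[T]$ and item $i\in[N]$ let $\mathbf{x}_{ti}\in\mathbb{R}^d$ be a feature vector with $\|\mathbf{x}_{ti}\|_2\le 1$, and let $\boldsymbol\vartheta^\star=(\boldsymbol\psi^\star,\boldsymbol\phi^\star)\in\mathbb{R}^{2d}$ satisfy $\|\boldsymbol\vartheta^\star\|_2\le W$ and $\langle\boldsymbol\phi^\star,\mathbf{x}_{ti}\rangle\ge L_0$ for all $t\in[T]$, $i\in[N]$. For each $t$ let $(S_t^\star,\mathbf{p}_t^\star)\in\operatorname{argmax}_{S\in\mathcal{S}_K,\ \mathbf{p}\in\mathbb{R}_+^N} R_t(S,\mathbf{p})$. Then for all $t\in[T]$ and all $i\in S_t^\star$, $$0\le p^\star_{ti}\le P:=\frac{3+W+\log K}{L_0}.$$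
   Context: $\mathcal{S}_K=\{S\subseteq[N]:|S|\le K\}$. For a price $p$, the attraction of item $i$ at round $t$ is $v_{ti}(p)=\exp(\langle\boldsymbol\psi^\star,\mathbf{x}_{ti}\rangle-\langle\boldsymbol\phi^\star,\mathbf{x}_{ti}\rangle p)$, and the expected revenue of offering assortment $S$ at price vector $\mathbf{p}\in\mathbb{R}_+^N$ is the multinomial-logit revenue $R_t(S,\mathbf{p})=\dfrac{\sum_{i\in S}p_i v_{ti}(p_i)}{1+\sum_{j\in S}v_{tj}(p_j)}$. *)

From HB Require Import structures.
From mathcomp Require Import all_boot all_order all_algebra.
From mathcomp Require Import all_classical all_reals all_analysis.
Set Implicit Arguments. Unset Strict Implicit. Unset Printing Implicit Defensive.
Import Order.TTheory GRing.Theory Num.Theory.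
Local Open Scope ring_scope.

Definition dotv (R : realType) (d : nat) (u v : 'rV[R]_d) : R :=
  \sum_(k < d) u 0 k * v 0 k.
Definition norm2 (R : realType) (d : nat) (u : 'rV[R]_d) : R :=
  Num.sqrt (dotv u u).
(* Norm of the stacked vector (psi, phi) in R^{2d}. *)
Definition norm2_pair (R : realType) (d : nat) (u v : 'rV[R]_d) : R :=
  Num.sqrt (dotv u u + dotv v v).

Definition attraction (R : realType) (d : nat) (psi phi x : 'rV[R]_d) (p : R) : R :=
  expR (dotv psi x - dotv phi x * p).

Definition revenue (R : realType) (d N : nat) (psi phi : 'rV[R]_d)
  (xt : 'I_N -> 'rV[R]_d) (S : {set 'I_N}) (p : 'I_N -> R) : R :=
  (\sum_(i in S) p i * attraction psi phi (xt i) (p i)) /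
  (1 + \sum_(j in S) attraction psi phi (xt j) (p j)).

From HB Require Import structures.
From mathcomp Require Import all_boot all_order all_algebra.
From mathcomp Require Import all_classical all_reals all_analysis.
From mathcomp Require Import ring lra.
Import Order.TTheory GRing.Theory Num.Theory.
Local Open Scope ring_scope.

(* Write a_i = <psi, x_i> and b_i = <phi, x_i>, so that v_i(q) = exp(a_i - b_i q),
   and let r be the optimal revenue.  The revenue satisfies
   r = sum_{i in S} (p_i - r) v_i(p_i), and changing the single price p_i to q
   leaves the revenue below r only if (q - r) v_i(q) <= (p_i - r) v_i(p_i); as
   q |-> (q - r) v_i(q) peaks exactly at q = r + 1/b_i with value
   exp(a_i - b_i r - 1)/b_i, optimality forces p_i = r + 1/b_i.  Bounding every
   summand by that peak gives L0 r <= K exp(W - L0 r - 1), whence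
   L0 r <= 1 + W + log K and p_i <= r + 1/L0 <= (2 + W + log K)/L0. *)

Section MarkupBound.
Context {R : realType}.

Lemma mul_expR1B_lt1 (y : R) : y != 1 -> y * expR (1 - y) < 1.
Proof.
move=> y_neq1.
have expRB : expR (y - 1) * expR (1 - y) = 1.
  by rewrite -expRD (_ : y - 1 + (1 - y) = 0) ?expR0 //; ring.
rewrite -[X in _ < X]expRB ltr_pM2r ?expR_gt0 //.
have : y - 1 != 0 by rewrite subr_eq0.
by move=> /expR_gt1Dx; lra.
Qed.

Lemma mul_expR1B_le1 (y : R) : y * expR (1 - y) <= 1.
Proof.
have [->|/mul_expR1B_lt1/ltW//] := eqVneq y 1.
by rewrite subrr expR0 mulr1.
Qed.

Lemma markup_expRE (a b c q : R) : b != 0 ->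
  (q - c) * expR (a - b * q) =
  b * (q - c) * expR (1 - b * (q - c)) * (expR (a - b * c - 1) / b).
Proof.
move=> b_neq0.
have -> : expR (a - b * q) = expR (1 - b * (q - c)) * expR (a - b * c - 1).
  by rewrite -expRD; congr expR; ring.
by field.
Qed.

Lemma markup_expR_le (a b c q : R) : 0 < b ->
  (q - c) * expR (a - b * q) <= expR (a - b * c - 1) / b.
Proof.
move=> b_gt0; rewrite markup_expRE ?gt_eqF //.
by rewrite ler_piMl ?mul_expR1B_le1 // divr_ge0 ?expR_ge0 ?ltW.
Qed.

Lemma markup_expR_lt (a b c q : R) : 0 < b -> q != c + b^-1 ->
  (q - c) * expR (a - b * q) < expR (a - b * c - 1) / b.
Proof.
move=> b_gt0 q_neq; rewrite markup_expRE ?gt_eqF //.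
rewrite gtr_pMl ?divr_gt0 ?expR_gt0 // mul_expR1B_lt1 //.
apply: contra q_neq => /eqP bq1; apply/eqP.
by rewrite -[q](subrK c) -[q - c](mulKf (lt0r_neq0 b_gt0)) bq1 mulr1 addrC.
Qed.

Lemma markup_expR_peak (a b c : R) : 0 < b ->
  (c + b^-1 - c) * expR (a - b * (c + b^-1)) = expR (a - b * c - 1) / b.
Proof.
move=> b_gt0; rewrite markup_expRE ?gt_eqF //.
by rewrite addrC addKr mulfV ?gt_eqF // subrr expR0 !mul1r.
Qed.

Lemma le_expRB_bound (s y : R) : 0 <= s -> y <= expR (s - y) -> y <= 1 + s.
Proof.
move=> s_ge0 y_le; rewrite leNgt; apply/negP => y_gt.
suff : expR (s - y) < 1 by lra.
by rewrite expR_lt1; lra.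
Qed.

End MarkupBound.

Section MNLRevenue.
Context {R : realType} {N : nat}.
Variables (S : {set 'I_N}) (a b : 'I_N -> R).

Definition mnl_attraction (j : 'I_N) (q : R) : R := expR (a j - b j * q).

Definition mnl_revenue (p : 'I_N -> R) : R :=
  (\sum_(j in S) p j * mnl_attraction j (p j)) /
  (1 + \sum_(j in S) mnl_attraction j (p j)).

Definition set_price (p : 'I_N -> R) (i : 'I_N) (q : R) : 'I_N -> R :=
  fun j => if j == i then q else p j.

Lemma mnl_den_gt0 (p : 'I_N -> R) : 0 < 1 + \sum_(j in S) mnl_attraction j (p j).
Proof. by apply: ltr_pwDl; rewrite ?ltr01 //; apply: sumr_ge0 => j _; rewrite expR_ge0. Qed.

Lemma mnl_revenue_ge0 (p : 'I_N -> R) : (forall j, 0 <= p j) -> 0 <= mnl_revenue p.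
Proof.
move=> p_ge0; apply: divr_ge0; last exact/ltW/mnl_den_gt0.
by apply: sumr_ge0 => j _; rewrite mulr_ge0 ?expR_ge0.
Qed.

Lemma mnl_revenue_subE (p : 'I_N -> R) (r : R) :
  \sum_(j in S) (p j - r) * mnl_attraction j (p j) - r =
  (1 + \sum_(j in S) mnl_attraction j (p j)) * (mnl_revenue p - r).
Proof.
under eq_bigr do rewrite mulrBl.
rewrite sumrB -mulr_sumr /mnl_revenue.
by move: (mnl_den_gt0 p) => /lt0r_neq0 den_neq0; field.
Qed.

Lemma mnl_revenue_fixpoint (p : 'I_N -> R) :
  \sum_(j in S) (p j - mnl_revenue p) * mnl_attraction j (p j) = mnl_revenue p.
Proof. by apply/eqP; rewrite -subr_eq0 mnl_revenue_subE subrr mulr0. Qed.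

Lemma mnl_revenue_le (p : 'I_N -> R) (r : R) :
  (mnl_revenue p <= r) = (\sum_(j in S) (p j - r) * mnl_attraction j (p j) <= r).
Proof.
by rewrite -subr_le0 -(pmulr_rle0 _ (mnl_den_gt0 p)) -mnl_revenue_subE subr_le0.
Qed.

Lemma mnl_revenue_set_price_le (p : 'I_N -> R) (i : 'I_N) (q : R) : i \in S ->
  mnl_revenue (set_price p i q) <= mnl_revenue p ->
  (q - mnl_revenue p) * mnl_attraction i q <=
  (p i - mnl_revenue p) * mnl_attraction i (p i).
Proof.
move=> Si; rewrite mnl_revenue_le (bigD1 i) //= /set_price eqxx.
set r := mnl_revenue p.
rewrite (eq_bigr (fun j => (p j - r) * mnl_attraction j (p j))); last first.
  by move=> j /andP[_ /negbTE ->].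
by have := mnl_revenue_fixpoint p; rewrite (bigD1 i) //= -/r; lra.
Qed.

Section Optimal.
Context {p : 'I_N -> R}.
Hypothesis p_ge0 : forall j, 0 <= p j.
Hypothesis p_opt : forall p', (forall j, 0 <= p' j) -> mnl_revenue p' <= mnl_revenue p.

Lemma mnl_optimal_priceE (i : 'I_N) : i \in S -> 0 < b i ->
  p i = mnl_revenue p + (b i)^-1.
Proof.
move=> Si bi_gt0; apply/eqP/negPn/negP => p_neq.
set r := mnl_revenue p.
have set_price_ge0 : forall j, 0 <= set_price p i (r + (b i)^-1) j.
  move=> j; rewrite /set_price; case: eqP => // _.
  by rewrite addr_ge0 ?mnl_revenue_ge0 // invr_ge0 ltW.
have := @mnl_revenue_set_price_le p i _ Si (p_opt _ set_price_ge0).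
rewrite /mnl_attraction markup_expR_peak // -/r.
by have := markup_expR_lt (a i) (b i) r (p i) bi_gt0 p_neq; lra.
Qed.

Section Bounds.
Context {K : nat} {W L0 : R}.
Hypotheses (L0_gt0 : 0 < L0) (W_ge0 : 0 <= W) (K_gt0 : (0 < K)%N).
Hypotheses (S_le : (#|S| <= K)%N) (a_le : forall j, a j <= W) (b_ge : forall j, L0 <= b j).

Lemma mnl_revenue_le_card :
  mnl_revenue p <= #|S|%:R * (expR (W - L0 * mnl_revenue p - 1) / L0).
Proof.
rewrite -{1}mnl_revenue_fixpoint; set r := mnl_revenue p.
have r_ge0 : 0 <= r := mnl_revenue_ge0 _ p_ge0.
rewrite mulr_natl -sumr_const ler_sum // => j _.
have bj_gt0 : 0 < b j by exact: lt_le_trans (b_ge j).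
apply: le_trans (markup_expR_le (a j) _ r (p j) bj_gt0) _.
apply: ler_pM.
- exact: expR_ge0.
- by rewrite invr_ge0 ltW.
- by rewrite ler_expR; have := a_le j; have := ler_wpM2r r_ge0 (b_ge j); lra.
- by rewrite lef_pV2 ?posrE.
Qed.

Lemma mnl_optimal_revenue_le : L0 * mnl_revenue p <= 1 + (W + ln K%:R).
Proof.
have K_pos : (0 : R) < K%:R by rewrite ltr0n.
have lnK_ge0 : 0 <= ln (K%:R : R) by rewrite ln_ge0 // ler1n.
apply: le_expRB_bound; first exact: addr_ge0.
set r := mnl_revenue p.
have : L0 * r <= K%:R * expR (W - L0 * r - 1).
  apply: le_trans (ler_wpM2l (ltW L0_gt0) mnl_revenue_le_card) _.
  rewrite mulrCA [L0 * (_ / _)]mulrC divfK ?gt_eqF //.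
  by apply: ler_wpM2r; rewrite ?expR_ge0 ?ler_nat.
move=> /le_trans; apply.
by rewrite -{1}(lnK K_pos) -expRD ler_expR; lra.
Qed.

Lemma mnl_optimal_price_le (i : 'I_N) : i \in S -> p i <= (2 + W + ln K%:R) / L0.
Proof.
move=> Si; have bi_gt0 : 0 < b i by exact: lt_le_trans (b_ge i).
rewrite (mnl_optimal_priceE i Si bi_gt0) ler_pdivlMr // mulrDl mulrC.
have : (b i)^-1 * L0 <= 1 by rewrite mulrC ler_pdivrMr // mul1r.
by have := mnl_optimal_revenue_le; lra.
Qed.

End Bounds.
End Optimal.
End MNLRevenue.

Section EuclideanNorm.
Context {R : realType} {d : nat}.
Implicit Types u v : 'rV[R]_d.

Lemma dotv_self_ge0 u : 0 <= dotv u u.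
Proof. by apply: sumr_ge0 => k _; rewrite -expr2 sqr_ge0. Qed.

Lemma norm2_ge0 u : 0 <= norm2 u.
Proof. exact: sqrtr_ge0. Qed.

Lemma sqr_norm2 u : norm2 u ^+ 2 = dotv u u.
Proof. by rewrite sqr_sqrtr ?dotv_self_ge0. Qed.

Lemma norm2_le_pair u v : norm2 u <= norm2_pair u v.
Proof. by rewrite ler_sqrt ?lerDl ?addr_ge0 ?dotv_self_ge0. Qed.

Lemma dotv_le u v (W : R) : 0 < W -> norm2 u <= W -> norm2 v <= 1 -> dotv u v <= W.
Proof.
move=> W_gt0 u_le v_le.
have uu_le : dotv u u <= W ^+ 2 by rewrite -sqr_norm2; have := norm2_ge0 u; nra.
have vv_le : dotv v v <= 1 by rewrite -sqr_norm2; have := norm2_ge0 v; nra.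
have : 0 <= \sum_(k < d) (u 0 k - W * v 0 k) ^+ 2
  by apply: sumr_ge0 => k _; rewrite sqr_ge0.
have -> : \sum_(k < d) (u 0 k - W * v 0 k) ^+ 2 =
          dotv u u - 2 * W * dotv u v + W ^+ 2 * dotv v v.
  by rewrite /dotv !mulr_sumr -sumrB -big_split /=; apply: eq_bigr => k _; ring.
nra.
Qed.

End EuclideanNorm.

Theorem lemma2p1 (R : realType) (N K d T : nat) (W L0 : R)
  (x : 'I_T -> 'I_N -> 'rV[R]_d) (psi phi : 'rV[R]_d)
  (Sstar : 'I_T -> {set 'I_N}) (pstar : 'I_T -> 'I_N -> R) :
  (0 < N)%N -> (0 < K)%N -> (0 < d)%N -> (0 < T)%N ->
  0 < W -> 0 < L0 ->
  (forall t i, norm2 (x t i) <= 1) ->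
  norm2_pair psi phi <= W ->
  (forall t i, L0 <= dotv phi (x t i)) ->
  (* (Sstar t, pstar t) is a maximizer of R_t over S_K x R_+^N *)
  (forall t, (#|Sstar t| <= K)%N /\ (forall i, 0 <= pstar t i)) ->
  (forall t (S : {set 'I_N}) (p : 'I_N -> R),
      (#|S| <= K)%N -> (forall i, 0 <= p i) ->
      revenue psi phi (x t) S p <= revenue psi phi (x t) (Sstar t) (pstar t)) ->
  forall t i, i \in Sstar t ->
    0 <= pstar t i /\ pstar t i <= (3 + W + ln (K%:R)) / L0.
Proof.
move=> _ K_gt0 _ _ W_gt0 L0_gt0 x_le1 pair_le phi_ge Sstar_feas Sstar_opt t i Si.
have [card_le pstar_ge0] := Sstar_feas t.
split; first exact: pstar_ge0.
have psi_le : forall j, dotv psi (x t j) <= W.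
  by move=> j; apply: dotv_le => //; apply: le_trans (norm2_le_pair _ phi) pair_le.
have := mnl_optimal_price_le (Sstar t) (fun j => dotv psi (x t j))
  (fun j => dotv phi (x t j)) pstar_ge0 (fun p => Sstar_opt t _ p card_le)
  L0_gt0 (ltW W_gt0) K_gt0 card_le psi_le (phi_ge t) i Si.
move=> /le_trans; apply.
by rewrite ler_wpM2r ?invr_ge0 ?ltW //; lra.
Qed.
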